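(* Let $G=(V,E)$ be an undirected weighted graph with vertex set $V$ of size $n$, where each edge $\{i,j\}$ carries a nonnegative weight $w_{ij}=w_{ji}$ (with $w_{ij}=0$ if there is no edge) and each vertex $i$ carries an attribute vector $x_i\in\mathbb{R}^d$. Define the normalized adjacency matrix $A$ by $$A_{ij}=\begin{cases}\dfrac{w_{ij}}{\sum_{i\le j} w_{ij}}, & i=j,\\[2mm] \dfrac{w_{ij}}{2\sum_{i\le j} w_{ij}}, & i\neq j,\end{cases}$$ and set $A_{i\cdot}=\sum_j A_{ij}$, $A_{\cdot j}=\sum_i A_{ij}$, and $d(x,y)=\|x-y\|$ (Euclidean norm). Let $(X,Y)$ be a pair of random vectors in $\mathbb{R}^d$ with joint distribution $$P(X=x,Y=y)=\sum_{\substack{i,j\in V\\ x_i=x,\ x_j=y}} A_{ij}.$$ Then the squared distance correlation of $X$ and $Y$, i.e. the squared vector assortativity $$r^2=\frac{\mathrm{dCov}^2(X,Y)}{\big(\mathrm{dCov}^2(X,X)\,\mathrm{dCov}^2(Y,Y)\big)^{1/2}},$$ equals $r^2=f_1/f_2$, where $$f_1=\sum_{i',j'}\sum_{i,j}A_{ij}A_{i'j'}\,d(x_i,x_{i'})\,d(x_j,x_{j'})-2\sum_{i,j}A_{ij}\Big(\sum_{i'}A_{i'\cdot}\,d(x_i,x_{i'})\Big)\Big(\sum_{j'}A_{\cdot j'}\,d(x_j,x_{j'})\Big)+\Big(\sum_{i,i'}A_{i\cdot}A_{i'\cdot}\,d(x_i,x_{i'})\Big)^2,$$ $$f_2=\s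um_{i,i'}A_{i\cdot}A_{i'\cdot}\,\big(d(x_i,x_{i'})\big)^2-2\sum_{i}A_{i\cdot}\Big(\sum_{i'}A_{i'\cdot}\,d(x_i,x_{i'})\Big)^2+\Big(\sum_{i,i'}A_{i\cdot}A_{i'\cdot}\,d(x_i,x_{i'})\Big)^2.$$
   Context: Distance covariance (in the form of Lyons): for random vectors $(X,Y)$ with marginal laws $\mu,\nu$ and finite first moments, let $(X',Y')$ be an independent copy of $(X,Y)$. Set $a_\mu(x)=E_{X'}\|x-X'\|$, $D(\mu)=E\|X-X'\|$, and $d_\mu(x,x')=\|x-x'\|-a_\mu(x)-a_\mu(x')+D(\mu)$, and similarly $a_\nu$, $D(\nu)$, $d_\nu$ for $Y$. Then $\mathrm{dCov}^2(X,Y)=E[d_\mu(X,X')\,d_\nu(Y,Y')]$, $\mathrm{dCov}^2(X,X)=E[d_\mu(X,X')^2]$, $\mathrm{dCov}^2(Y,Y)=E[d_\nu(Y,Y')^2]$. The distance correlation squared is $\mathrm{dCov}^2(X,Y)/(\mathrm{dCov}^2(X,X)\,\mathrm{dCov}^2(Y,Y))^{1/2}$ (defined when the denominator is positive). Note that the joint distribution of $(X,Y)$ is symmetric, so $X$ and $Y$ have the same marginal law, given by $P(X=x)=\sum_{i:\,x_i=x}A_{i\cdot}$. *)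

From HB Require Import structures.
From mathcomp Require Import all_boot all_order all_algebra.
From mathcomp Require Import reals.
Set Implicit Arguments. Unset Strict Implicit. Unset Printing Implicit Defensive.
Import Order.TTheory GRing.Theory Num.Theory.
Local Open Scope ring_scope.

Section Defs.
Variable R : realType.

Definition euclid_norm (d : nat) (v : 'rV[R]_d) : R :=
  Num.sqrt (\sum_(k < d) v ord0 k ^+ 2).
Definition dist (d : nat) (u v : 'rV[R]_d) : R := euclid_norm (u - v).

(* A joint law of (X,Y) on R^d x R^d is given by its mass function
   p u v = P(X = u, Y = v), vanishing outside s x s for a uniq seq s. *)
Section DCov.
Variables (d : nat) (s : seq 'rV[R]_d) (p : 'rV[R]_d -> 'rV[R]_d -> R).

Definition marg1 (u : 'rV[R]_d) : R := \sum_(v <- s) p u v.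
Definition marg2 (v : 'rV[R]_d) : R := \sum_(u <- s) p u v.

Definition a_of (m : 'rV[R]_d -> R) (x : 'rV[R]_d) : R :=
  \sum_(u <- s) m u * dist x u.
Definition D_of (m : 'rV[R]_d -> R) : R :=
  \sum_(u <- s) \sum_(u' <- s) m u * m u' * dist u u'.
Definition dcent (m : 'rV[R]_d -> R) (x x' : 'rV[R]_d) : R :=
  dist x x' - a_of m x - a_of m x' + D_of m.

(* dCov^2(X,Y) = E[d_mu(X,X') d_nu(Y,Y')], (X',Y') an independent copy *)
Definition dCov2 : R :=
  \sum_(u <- s) \sum_(v <- s) \sum_(u' <- s) \sum_(v' <- s)
    p u v * p u' v' * dcent marg1 u u' * dcent marg2 v v'.
End DCov.

(* joint law of (Z,Z) when Z has law m *)
Definition diag_law (d : nat) (m : 'rV[R]_d -> R) (u v : 'rV[R]_d) : R :=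
  if u == v then m u else 0.

Definition dCor2 (d : nat) (s : seq 'rV[R]_d) (p : 'rV[R]_d -> 'rV[R]_d -> R) : R :=
  dCov2 s p /
  Num.sqrt (dCov2 s (diag_law (marg1 s p)) * dCov2 s (diag_law (marg2 s p))).

Section Graph.
Variables (n d : nat) (w : 'I_n -> 'I_n -> R) (x : 'I_n -> 'rV[R]_d).

Definition total_weight : R := \sum_(i < n) \sum_(j < n | (i <= j)%N) w i j.

Definition normA (i j : 'I_n) : R :=
  if i == j then w i j / total_weight else w i j / (2 * total_weight).

Definition Arow (i : 'I_n) : R := \sum_(j < n) normA i j.
Definition Acol (j : 'I_n) : R := \sum_(i < n) normA i j.

Definition attr_support : seq 'rV[R]_d := undup [seq x i | i <- enum 'I_n].

Definition attr_law (u v : 'rV[R]_d) : R :=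
  \sum_(i < n) \sum_(j < n | (x i == u) && (x j == v)) normA i j.

Definition dx (i i' : 'I_n) : R := dist (x i) (x i').

Definition f1 : R :=
  \sum_(i' < n) \sum_(j' < n) \sum_(i < n) \sum_(j < n)
      normA i j * normA i' j' * dx i i' * dx j j'
  - 2 * \sum_(i < n) \sum_(j < n)
      normA i j * (\sum_(i' < n) Arow i' * dx i i')
                * (\sum_(j' < n) Acol j' * dx j j')
  + (\sum_(i < n) \sum_(i' < n) Arow i * Arow i' * dx i i') ^+ 2.

Definition f2 : R :=
  \sum_(i < n) \sum_(i' < n) Arow i * Arow i' * dx i i' ^+ 2
  - 2 * \sum_(i < n) Arow i * (\sum_(i' < n) Arow i' * dx i i') ^+ 2
  + (\sum_(i < n) \sum_(i' < n) Arow i * Arow i' * dx i i') ^+ 2.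
End Graph.
End Defs.

(* Pulling the law of (X, Y) back to the vertices turns dCov^2 into a four-fold sum
   against the normalised adjacency matrix A, whose row sums A_i. give the law of X
   and, w being symmetric, also the law of Y.  A doubly centred distance annihilates
   every function of the form u(i) + v(k), so the centred product expands to
   E d(X,X') d(Y,Y') - 2 E[a_mu(X) a_nu(Y)] + D(mu) D(nu), which is f1.  The law of
   (X, X) pulls back to the diagonal matrix diag(A_i.), for which the same expansion
   gives f2 = sum_(i,k) A_i. A_k. d_mu(x_i, x_k)^2 >= 0; hence the denominator
   sqrt(f2 * f2) is f2. *)

From HB Require Import structures.
From mathcomp Require Import all_boot all_order all_algebra.
From mathcomp Require Import reals ring.
Set Implicit Arguments. Unset Strict Implicit. Unset Printing Implicit Defensive.
Import Order.TTheory GRing.Theory Num.Theory.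
Local Open Scope ring_scope.

Lemma exchange_big_pairs (R : nmodType) (I J K L : Type)
    (ri : seq I) (rj : seq J) (rk : seq K) (rl : seq L)
    (F : I -> J -> K -> L -> R) :
  \sum_(i <- ri) \sum_(j <- rj) \sum_(k <- rk) \sum_(l <- rl) F i j k l =
  \sum_(k <- rk) \sum_(l <- rl) \sum_(i <- ri) \sum_(j <- rj) F i j k l.
Proof.
transitivity
  (\sum_(i <- ri) \sum_(k <- rk) \sum_(j <- rj) \sum_(l <- rl) F i j k l).
  by apply: eq_bigr => i _; rewrite exchange_big.
rewrite exchange_big; apply: eq_bigr => k _.
transitivity (\sum_(i <- ri) \sum_(l <- rl) \sum_(j <- rj) F i j k l).
  by apply: eq_bigr => i _; rewrite exchange_big.
by rewrite exchange_big.
Qed.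

Lemma sum_eq_uniq (R : pzSemiRingType) (T : eqType) (s : seq T) (a : T)
    (g : T -> R) :
  uniq s -> a \in s -> \sum_(u <- s) (a == u)%:R * g u = g a.
Proof.
move=> s_uniq a_s; rewrite (big_rem a) //= eqxx mul1r big_seq big1 ?addr0 // => u.
by rewrite (mem_rem_uniq _ s_uniq) => /andP[/negPf ua _]; rewrite eq_sym ua mul0r.
Qed.

Section IndexedDistanceCovariance.
Variables (R : comPzRingType) (I : finType).
Implicit Types (B dd F G : I -> I -> R) (m r c u v : I -> R).

Definition a_ix m dd i : R := \sum_k m k * dd i k.
Definition D_ix m dd : R := \sum_i \sum_k m i * m k * dd i k.
Definition dcent_ix m dd i k : R :=
  dd i k - a_ix m dd i - a_ix m dd k + D_ix m dd.

(* [E[F(i, k) G(j, l)]] for independent index pairs [(i, j)], [(k, l)] of law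
   [B]. *)
Definition pair_moment B F G : R :=
  \sum_i \sum_j \sum_k \sum_l B i j * B k l * F i k * G j l.

Definition diag_ix m i j : R := (i == j)%:R * m i.

Lemma eq_pair_moment B F F' G G' :
    (forall i k, F i k = F' i k) -> (forall j l, G j l = G' j l) ->
  pair_moment B F G = pair_moment B F' G'.
Proof. by move=> eF eG; do 4![apply: eq_bigr => ? _]; rewrite eF eG. Qed.

Lemma pair_momentE B F G :
  pair_moment B F G = \sum_k \sum_l \sum_i \sum_j B i j * B k l * F i k * G j l.
Proof. exact: exchange_big_pairs. Qed.

Lemma pair_moment_swap B F G :
  pair_moment B F G = pair_moment B (fun i k => F k i) (fun j l => G l j).
Proof.
by rewrite pair_momentE; do 4![apply: eq_bigr => ? _]; rewrite [B _ _ * _]mulrC.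
Qed.

Lemma pair_momentC B F G :
  pair_moment B F G = pair_moment (fun i j => B j i) G F.
Proof.
rewrite /pair_moment exchange_big; apply: eq_bigr => j _; apply: eq_bigr => i _.
rewrite exchange_big; apply: eq_bigr => l _; apply: eq_bigr => k _.
by rewrite mulrAC.
Qed.

Lemma pair_momentDl B F F' G :
  pair_moment B (fun i k => F i k + F' i k) G =
  pair_moment B F G + pair_moment B F' G.
Proof.
rewrite /pair_moment -big_split; apply: eq_bigr => i _.
rewrite -big_split; apply: eq_bigr => j _.
rewrite -big_split; apply: eq_bigr => k _.
by rewrite -big_split; apply: eq_bigr => l _; rewrite mulrDr mulrDl.
Qed.

Section ColumnSums.
Variables (B : I -> I -> R) (c : I -> R).
Hypothesis B_col : forall j, \sum_i B i j = c j.

Lemma pair_moment_fun1 u G :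
  pair_moment B (fun i _ => u i) G =
  \sum_i \sum_j B i j * (u i * \sum_l c l * G j l).
Proof.
do 2![apply: eq_bigr => ? _]; rewrite exchange_big !mulr_sumr.
apply: eq_bigr => l _; rewrite -B_col !mulr_suml !mulr_sumr.
by apply: eq_bigr => k _; ring.
Qed.

Lemma pair_moment_addl F G u v :
  pair_moment B (fun i k => F i k + (u i + v k)) G =
  pair_moment B F G +
  \sum_i \sum_j B i j * (u i * \sum_l c l * G j l + v i * \sum_l c l * G l j).
Proof.
rewrite !pair_momentDl (pair_moment_fun1 u G).
rewrite (pair_moment_swap B (fun _ k => v k)) (pair_moment_fun1 v).
congr (_ + _); rewrite -big_split; apply: eq_bigr => i _.
by rewrite -big_split; apply: eq_bigr => j _; rewrite mulrDr.
Qed.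

End ColumnSums.

Lemma pair_moment_addr B r F G u v :
    (forall i, \sum_j B i j = r i) ->
    (forall i, \sum_k r k * F i k = 0) -> (forall k, \sum_i r i * F i k = 0) ->
  pair_moment B F (fun j l => G j l + (u j + v l)) = pair_moment B F G.
Proof.
move=> B_row F_row F_col.
rewrite pair_momentC (pair_moment_addl B_row) [RHS]pair_momentC.
rewrite [X in _ + X]big1 ?addr0 // => j _; rewrite big1 // => i _.
by rewrite F_row F_col !mulr0 addr0 mulr0.
Qed.

Lemma sum_a_ix m dd : \sum_k m k * a_ix m dd k = D_ix m dd.
Proof.
by apply: eq_bigr => k _; rewrite mulr_sumr; apply: eq_bigr => l _; rewrite mulrA.
Qed.

Section Centering.
Variables (r : I -> R) (dd : I -> I -> R).
Hypotheses (r_sum1 : \sum_i r i = 1) (dd_sym : forall i k, dd i k = dd k i).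

Lemma dcent_ix_sym i k : dcent_ix r dd i k = dcent_ix r dd k i.
Proof. by rewrite /dcent_ix dd_sym; ring. Qed.

Lemma sum_dcent_ix_r i : \sum_k r k * dcent_ix r dd i k = 0.
Proof.
rewrite (eq_bigr (fun k => r k * dd i k - r k * a_ix r dd i
                           - r k * a_ix r dd k + r k * D_ix r dd)); last first.
  by move=> k _; rewrite /dcent_ix; ring.
rewrite big_split !sumrB /= -/(a_ix r dd i) (sum_a_ix r dd) -!mulr_suml r_sum1.
by ring.
Qed.

Lemma sum_dcent_ix_l k : \sum_i r i * dcent_ix r dd i k = 0.
Proof.
by rewrite -[RHS](sum_dcent_ix_r k); apply: eq_bigr => i _; rewrite dcent_ix_sym.
Qed.

Lemma pair_moment_dcent B c :
    (forall i, \sum_j B i j = r i) -> (forall j, \sum_i B i j = c j) ->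
  pair_moment B (dcent_ix r dd) (dcent_ix c dd) =
  pair_moment B dd dd - 2 * (\sum_i \sum_j B i j * a_ix r dd i * a_ix c dd j)
  + D_ix r dd * D_ix c dd.
Proof.
move=> B_row B_col.
set a := a_ix r dd; set b := a_ix c dd; set Dr := D_ix r dd.
have -> : pair_moment B (dcent_ix r dd) (dcent_ix c dd) =
          pair_moment B (dcent_ix r dd) dd.
  rewrite -(pair_moment_addr dd (fun j => D_ix c dd - b j) (fun l => - b l)
              B_row sum_dcent_ix_r sum_dcent_ix_l).
  by apply: eq_pair_moment => // j l; rewrite /dcent_ix -/b; ring.
have -> : pair_moment B (dcent_ix r dd) dd =
          pair_moment B (fun i k => dd i k + (- a i + (Dr - a k))) dd.
  by apply: eq_pair_moment => // i k; rewrite /dcent_ix -/a -/Dr; ring.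
rewrite (pair_moment_addl B_col) -addrA; congr (_ + _).
have sum_Bb : \sum_i \sum_j B i j * b j = D_ix c dd.
  rewrite exchange_big -sum_a_ix; apply: eq_bigr => j _.
  by rewrite -B_col mulr_suml.
transitivity (\sum_i \sum_j (Dr * (B i j * b j) - 2 * (B i j * a i * b j))).
  have bE j : \sum_l c l * dd j l = b j by [].
  have b_sym j : \sum_l c l * dd l j = b j.
    by apply: eq_bigr => l _; rewrite dd_sym.
  apply: eq_bigr => i _; apply: eq_bigr => j _.
  by rewrite bE b_sym; ring.
under eq_bigr do rewrite sumrB -!mulr_sumr.
by rewrite sumrB -!mulr_sumr sum_Bb; ring.
Qed.

End Centering.

Lemma sum_diag_ix m i g : \sum_j diag_ix m i j * g j = m i * g i.
Proof.
rewrite -(sum_eq_uniq (fun j => m i * g j) (index_enum_uniq I) (mem_index_enum i)).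
by apply: eq_bigr => j _; rewrite mulrA.
Qed.

Lemma sum_diag_ix_row m i : \sum_j diag_ix m i j = m i.
Proof.
rewrite -[RHS]mulr1 -(sum_diag_ix m i (fun=> 1)).
by apply: eq_bigr => j _; rewrite mulr1.
Qed.

Lemma sum_diag_ix_col m j : \sum_i diag_ix m i j = m j.
Proof.
rewrite -(sum_diag_ix_row m j); apply: eq_bigr => i _.
by rewrite /diag_ix eq_sym; case: eqP => [->|]; rewrite ?mul0r.
Qed.

Lemma pair_moment_diag m F G :
  pair_moment (diag_ix m) F G = \sum_i \sum_k m i * m k * F i k * G i k.
Proof.
apply: eq_bigr => i _.
transitivity (\sum_j diag_ix m i j * (\sum_k m k * F i k * G j k)).
  apply: eq_bigr => j _; rewrite mulr_sumr; apply: eq_bigr => k _.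
  rewrite (eq_bigr (fun l => diag_ix m k l * (diag_ix m i j * F i k * G j l))).
    by rewrite sum_diag_ix; ring.
  by move=> l _; ring.
by rewrite sum_diag_ix mulr_sumr; apply: eq_bigr => k _; ring.
Qed.

End IndexedDistanceCovariance.

Lemma pair_moment_diag_ge0 (R : realDomainType) (I : finType) (m : I -> R) F :
  (forall i, 0 <= m i) -> 0 <= pair_moment (diag_ix m) F F.
Proof.
move=> m_ge0; rewrite pair_moment_diag; apply: sumr_ge0 => i _.
apply: sumr_ge0 => k _; rewrite -mulrA -expr2.
by rewrite mulr_ge0 ?sqr_ge0 ?mulr_ge0 ?m_ge0.
Qed.

Lemma dist_sym (R : realType) (d : nat) (u v : 'rV[R]_d) : dist u v = dist v u.
Proof.
rewrite /dist /euclid_norm -opprB; congr Num.sqrt.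
by apply: eq_bigr => k _; rewrite !mxE sqrrN.
Qed.

Section Pushforward.
Variables (R : realType) (d : nat) (I : finType).
Variables (s : seq 'rV[R]_d) (x : I -> 'rV[R]_d).

Definition pushforward1 (m : 'rV[R]_d -> R) (r : I -> R) :=
  forall g : 'rV[R]_d -> R, \sum_(u <- s) m u * g u = \sum_i r i * g (x i).

Definition pushforward2 (q : 'rV[R]_d -> 'rV[R]_d -> R) (B : I -> I -> R) :=
  forall F : 'rV[R]_d -> 'rV[R]_d -> R,
    \sum_(u <- s) \sum_(v <- s) q u v * F u v = \sum_i \sum_j B i j * F (x i) (x j).

Local Notation dist_x := (fun i k => dist (x i) (x k)).

Lemma pushforward_marg1 q B r :
  pushforward2 q B -> (forall i, \sum_j B i j = r i) -> pushforward1 (marg1 s q) r.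
Proof.
move=> qB B_row g; under eq_bigr do rewrite mulr_suml.
rewrite (qB (fun u _ => g u)); apply: eq_bigr => i _.
by rewrite -B_row mulr_suml.
Qed.

Lemma pushforward_marg2 q B c :
  pushforward2 q B -> (forall j, \sum_i B i j = c j) -> pushforward1 (marg2 s q) c.
Proof.
move=> qB B_col g; under eq_bigr do rewrite mulr_suml.
rewrite exchange_big (qB (fun _ v => g v)) exchange_big; apply: eq_bigr => j _.
by rewrite -B_col mulr_suml.
Qed.

Lemma pushforward_diag_law m r :
  uniq s -> pushforward1 m r -> pushforward2 (diag_law m) (diag_ix r).
Proof.
move=> s_uniq mr F.
transitivity (\sum_(u <- s) m u * F u u).
  rewrite big_seq [RHS]big_seq; apply: eq_bigr => u u_s.
  rewrite -(sum_eq_uniq (fun v => m u * F u v) s_uniq u_s); apply: eq_bigr => v _.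
  by rewrite /diag_law; case: eqVneq => _; rewrite ?mul1r ?mul0r.
rewrite (mr (fun u => F u u)); apply: eq_bigr => i _.
by rewrite sum_diag_ix.
Qed.

Lemma a_of_pushforward m r i :
  pushforward1 m r -> a_of s m (x i) = a_ix r dist_x i.
Proof. by move=> mr; rewrite /a_of mr. Qed.

Lemma D_of_pushforward m r : pushforward1 m r -> D_of s m = D_ix r dist_x.
Proof.
move=> mr; transitivity (\sum_(u <- s) m u * a_of s m u).
  apply: eq_bigr => u _; rewrite /a_of mulr_sumr.
  by apply: eq_bigr => v _; rewrite mulrA.
rewrite mr -sum_a_ix; apply: eq_bigr => i _.
by rewrite (a_of_pushforward _ mr).
Qed.

Lemma dCov2_pushforward q B r c :
    pushforward2 q B ->
    (forall i, \sum_j B i j = r i) -> (forall j, \sum_i B i j = c j) ->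
  dCov2 s q = pair_moment B (dcent_ix r dist_x) (dcent_ix c dist_x).
Proof.
move=> qB B_row B_col.
have X_law := pushforward_marg1 qB B_row; have Y_law := pushforward_marg2 qB B_col.
transitivity (\sum_(u <- s) \sum_(v <- s) q u v * (\sum_(u' <- s) \sum_(v' <- s)
    q u' v' * (dcent s (marg1 s q) u u' * dcent s (marg2 s q) v v'))).
  apply: eq_bigr => u _; apply: eq_bigr => v _; rewrite mulr_sumr.
  apply: eq_bigr => u' _; rewrite mulr_sumr.
  by apply: eq_bigr => v' _; rewrite !mulrA.
under eq_bigr do under eq_bigr do rewrite qB.
rewrite qB; apply: eq_bigr => i _; apply: eq_bigr => j _; rewrite mulr_sumr.
apply: eq_bigr => k _; rewrite mulr_sumr; apply: eq_bigr => l _.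
rewrite /dcent !(a_of_pushforward _ X_law) !(a_of_pushforward _ Y_law).
by rewrite (D_of_pushforward X_law) (D_of_pushforward Y_law) !mulrA.
Qed.

End Pushforward.

Section AttributeGraph.
Variables (R : realType) (n d : nat) (w : 'I_n -> 'I_n -> R) (x : 'I_n -> 'rV[R]_d).
Hypotheses (w_ge0 : forall i j, 0 <= w i j) (w_sym : forall i j, w i j = w j i).
Hypothesis tw_gt0 : 0 < total_weight w.

Lemma attr_law_pushforward :
  pushforward2 (attr_support x) x (attr_law w x) (normA w).
Proof.
move=> F; have s_uniq : uniq (attr_support x) := undup_uniq _.
have x_s i : x i \in attr_support x by rewrite mem_undup map_f ?mem_enum.
transitivity (\sum_(u <- attr_support x) \sum_(v <- attr_support x) \sum_i \sum_j
    (x i == u)%:R * ((x j == v)%:R * (normA w i j * F u v))).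
  apply: eq_bigr => u _; apply: eq_bigr => v _.
  rewrite /attr_law mulr_suml; apply: eq_bigr => i _.
  rewrite big_mkcond mulr_suml; apply: eq_bigr => j _.
  by case: (x i == u); case: (x j == v); rewrite /= ?mul1r ?mul0r ?mulr0.
rewrite exchange_big_pairs; apply: eq_bigr => i _; apply: eq_bigr => j _.
under eq_bigr do rewrite -mulr_sumr (sum_eq_uniq _ s_uniq (x_s j)).
by rewrite (sum_eq_uniq (fun u => normA w i j * F u (x j)) s_uniq (x_s i)).
Qed.

Lemma normA_sym i j : normA w i j = normA w j i.
Proof. by rewrite /normA eq_sym w_sym. Qed.

Lemma Acol_Arow j : Acol w j = Arow w j.
Proof. by apply: eq_bigr => i _; rewrite normA_sym. Qed.

Lemma Arow_ge0 i : 0 <= Arow w i.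
Proof.
apply: sumr_ge0 => j _; rewrite /normA.
by case: eqVneq => _; rewrite divr_ge0 ?mulr_ge0 ?w_ge0 ?ler0n ?(ltW tw_gt0).
Qed.

(* [(i <= j) + (j <= i) = 1 + (i == j)], and [w] is symmetric. *)
Lemma total_weight_double :
  2 * total_weight w = \sum_i \sum_j (1 + (i == j)%:R) * w i j.
Proof.
have tw_le : total_weight w = \sum_(i < n) \sum_(j < n) ((i <= j)%N)%:R * w i j.
  apply: eq_bigr => i _; rewrite big_mkcond; apply: eq_bigr => j _.
  by case: leqP; rewrite ?mul1r ?mul0r.
have tw_ge : total_weight w = \sum_(i < n) \sum_(j < n) ((j <= i)%N)%:R * w i j.
  rewrite tw_le exchange_big; apply: eq_bigr => i _; apply: eq_bigr => j _.
  by rewrite w_sym.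
rewrite mulr_natl mulr2n {1}tw_le tw_ge -big_split; apply: eq_bigr => i _.
rewrite -big_split; apply: eq_bigr => j _ /=; rewrite -mulrDl -val_eqE /=.
by case: ltngtP; rewrite ?addr0 ?add0r.
Qed.

Lemma sum_Arow : \sum_i Arow w i = 1.
Proof.
have tw2_neq0 : 2 * total_weight w != 0 by rewrite mulf_neq0 ?pnatr_eq0 // gt_eqF.
rewrite -(divff tw2_neq0) {1}total_weight_double mulr_suml.
apply: eq_bigr => i _; rewrite mulr_suml; apply: eq_bigr => j _; rewrite /normA.
case: eqVneq => _ /=; last by rewrite addr0 mul1r.
by field; rewrite gt_eqF.
Qed.

Lemma dCov2_attr_law : dCov2 (attr_support x) (attr_law w x) = f1 w x.
Proof.
rewrite (dCov2_pushforward (r := Arow w) (c := Acol w) attr_law_pushforward) //.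
rewrite (pair_moment_dcent (dd := dx x) sum_Arow (fun i k => dist_sym _ _)) //.
have -> : D_ix (Acol w) (dx x) = D_ix (Arow w) (dx x).
  by apply: eq_bigr => i _; apply: eq_bigr => k _; rewrite !Acol_Arow.
by rewrite pair_momentE -expr2.
Qed.

Lemma f2_pair_moment :
  f2 w x = pair_moment (diag_ix (Arow w)) (dcent_ix (Arow w) (dx x))
                                          (dcent_ix (Arow w) (dx x)).
Proof.
rewrite (pair_moment_dcent sum_Arow (fun i k => dist_sym _ _)
  (sum_diag_ix_row _) (sum_diag_ix_col _)) pair_moment_diag.
congr (_ - 2 * _ + _).
  by do 2![apply: eq_bigr => ? _]; rewrite expr2 mulrA.
apply: eq_bigr => i _; rewrite expr2.
transitivity (\sum_j diag_ix (Arow w) i j *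
                (a_ix (Arow w) (dx x) i * a_ix (Arow w) (dx x) j)).
  by rewrite sum_diag_ix.
by apply: eq_bigr => j _; rewrite mulrA.
Qed.

Lemma f2_ge0 : 0 <= f2 w x.
Proof. by rewrite f2_pair_moment pair_moment_diag_ge0 // => i; apply: Arow_ge0. Qed.

Lemma dCov2_diag_law m :
  pushforward1 (attr_support x) x m (Arow w) ->
  dCov2 (attr_support x) (diag_law m) = f2 w x.
Proof.
move=> mX; rewrite f2_pair_moment.
exact: dCov2_pushforward (pushforward_diag_law (undup_uniq _) mX)
  (sum_diag_ix_row _) (sum_diag_ix_col _).
Qed.

End AttributeGraph.

Theorem mainTheorem1 (R : realType) (n d : nat)
    (w : 'I_n -> 'I_n -> R) (x : 'I_n -> 'rV[R]_d)
    (w_ge0 : forall i j, 0 <= w i j)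
    (w_sym : forall i j, w i j = w j i)
    (tw_gt0 : 0 < total_weight w)
    (den_gt0 :
       0 < dCov2 (attr_support x) (diag_law (marg1 (attr_support x) (attr_law w x)))
           * dCov2 (attr_support x) (diag_law (marg2 (attr_support x) (attr_law w x)))) :
  dCor2 (attr_support x) (attr_law w x) = f1 w x / f2 w x.
Proof.
have XY_law := attr_law_pushforward w x.
have X_law := pushforward_marg1 (r := Arow w) XY_law (fun i => erefl).
have Y_law := pushforward_marg2 XY_law (Acol_Arow w_sym).
rewrite /dCor2 dCov2_attr_law // (dCov2_diag_law w_sym tw_gt0 X_law).
rewrite (dCov2_diag_law w_sym tw_gt0 Y_law).
by rewrite -expr2 sqrtr_sqr ger0_norm // f2_ge0.
Qed.
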